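(* Let $c\in\mathsf{ACirc}[n,m]$ and let $\hat c\in\mathsf{Circ}[n+1,m]$ be obtained as follows: replace $c$ by an equivalent circuit containing exactly one occurrence of $\mathbf 1$ and no occurrence of $\mathbf 1^{op}$, remove this $\mathbf 1$ and replace it by an identity wire extended to the left boundary, creating a new left port. Then $c$ is realisable if and only if this new left port of $\hat c$ (the one to which $\mathbf 1$ was connected) is an input port of $\hat c$.
   Context: Fix a field $k$. Circuits: terms built from generators with sorts $(n,m)$: copier $\Delta:(1,2)$, discard $!:(1,0)$, amplifier $\mathsf{s}_r:(1,1)$ ($r\in k$), register $\mathsf{x}:(1,1)$, adder $+:(2,1)$, zero $0:(0,1)$, one $\mathbf{1}:(0,1)$; mirror images $\Delta^{op}:(2,1)$, $!^{op}:(0,1)$, $\mathsf{s}_r^{op}$, $\mathsf{x}^{op}:(1,1)$, $+^{op}:(1,2)$, $0^{op}:(1,0)$, $\mathbf{1}^{op}:(1,0)$; $\mathrm{id}_0,\mathrm{id}_1,\mathrm{sw}:(2,2)$; closed under $;$ and $\oplus$. $\mathsf{ACirc}$ is the resulting prop; $\mathsf{Circ}$ the sub-prop of circuits without $\mathbf 1,\mathbf 1^{op}$. Denotation over the field $k(x)$ of polynomial fractions: $[\![\Delta]\!]=\{(p,(p,p))\}$, $[\![!]\!]=\{(p,\bullet)\}$, $[\![+]\!]=\{((p,q),p+q)\}$, $[\![0]\!]=\{(\bullet,0)\}$, $[\![\mathbf 1]\!]=\{(\bullet,1)\}$, $[\![\mathsf s_r]\!]=\{(p,rp)\}$, $[\![\mathsf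 x]\!]=\{(p,px)\}$; mirrored generators denote converse relations; structural ones identity, swap, $\{(\bullet,\bullet)\}$; $;$ relational composition, $\oplus$ product. Circuits are equivalent if they have the same denotation (equivalently, equal in the complete theory AIH). Feedback: for $c:(n+1,m+1)$, $\mathrm{Tr}(c):(n,m)$ connects the last right port of $c$ to its last left port through a register $\mathsf x$, bending with cup $\eta=!^{op};\Delta:(0,2)$ and cap $\epsilon=\Delta^{op};!:(2,0)$. $\mathsf{SF}$ (signal flow graphs) is the closure of $\{\Delta,!,\mathsf s_r,\mathsf x,+,0,\mathrm{id}_0,\mathrm{id}_1,\mathrm{sw}\}$ under $;$, $\oplus$, $\mathrm{Tr}$; $\mathsf{ASF}$ (affine signal flow graphs) is the same closure with $\mathbf 1$ added. Rewiring: for $c:(n,m)$ and a partition of its ports into inputs $I$ and outputs $O$, the rewiring is the circuit of sort $(|I|,|O|)$ obtained by bending left ports in $O$ to the right with cups and right ports in $I$ to the left with caps. A port of a circuit $d\in\mathsf{Circ}$ is an input port if there is a partition with that port in $I$ whose rewiring is equivalent to a circuit of $\mathsf{SF}$. A circuit $c\in\mathsf{ACirc}$ is realisable if for some partition its rewiring is equivalent to a circuit of $\mathsf{ASF}$. *)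

From HB Require Import structures.
From mathcomp Require Import all_boot all_order all_algebra.
From mathcomp Require Import fraction.
Set Implicit Arguments. Unset Strict Implicit. Unset Printing Implicit Defensive.
Import GRing.Theory.
Local Open Scope ring_scope.

Section Circuits.
Variable k : fieldType.

Inductive gen : nat -> nat -> Type :=
| GCopy : gen 1 2
| GDisc : gen 1 0
| GAmp : k -> gen 1 1
| GReg : gen 1 1
| GAdd : gen 2 1
| GZero : gen 0 1
| GOne : gen 0 1.

Inductive circ : nat -> nat -> Type :=
| CGen n m : gen n m -> circ n m
| COp n m : gen n m -> circ m n
| CId0 : circ 0 0
| CId1 : circ 1 1
| CSw : circ 2 2
| CSeq n l m : circ n l -> circ l m -> circ n m
| CTens n1 m1 n2 m2 : circ n1 m1 -> circ n2 m2 -> circ (n1 + n2) (m1 + m2).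

Definition K := {fraction {poly k}}.
Definition kx (p : {poly k}) : K := FracField.tofrac p.
Definition xK : K := kx 'X.

Definition o0 : 'I_2 := ord0.
Definition o1 : 'I_2 := ord_max.

Definition sem_gen n m (g : gen n m) : 'rV[K]_n -> 'rV[K]_m -> Prop :=
  match g in gen n m return 'rV[K]_n -> 'rV[K]_m -> Prop with
  | GCopy => fun u v => v ord0 o0 = u ord0 ord0 /\ v ord0 o1 = u ord0 ord0
  | GDisc => fun _ _ => True
  | GAmp r => fun u v => v ord0 ord0 = kx r%:P * u ord0 ord0
  | GReg => fun u v => v ord0 ord0 = u ord0 ord0 * xK
  | GAdd => fun u v => v ord0 ord0 = u ord0 o0 + u ord0 o1
  | GZero => fun _ v => v ord0 ord0 = 0
  | GOne => fun _ v => v ord0 ord0 = 1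
  end.

Fixpoint sem n m (c : circ n m) : 'rV[K]_n -> 'rV[K]_m -> Prop :=
  match c in circ n m return 'rV[K]_n -> 'rV[K]_m -> Prop with
  | CGen _ _ g => sem_gen g
  | COp _ _ g => fun u v => sem_gen g v u
  | CId0 => fun _ _ => True
  | CId1 => fun u v => u = v
  | CSw => fun u v => v ord0 o0 = u ord0 o1 /\ v ord0 o1 = u ord0 o0
  | CSeq _ _ _ c1 c2 => fun u v => exists w, sem c1 u w /\ sem c2 w v
  | CTens _ _ _ _ c1 c2 => fun u v =>
      sem c1 (lsubmx u) (lsubmx v) /\ sem c2 (rsubmx u) (rsubmx v)
  end.

Definition circ_equiv n m (c d : circ n m) : Prop :=
  forall u v, sem c u v <-> sem d u v.

Definition is_one n m (g : gen n m) : bool :=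
  match g with GOne => true | _ => false end.

Fixpoint uses_one n m (c : circ n m) : bool :=
  match c with
  | CGen _ _ g => is_one g
  | COp _ _ g => is_one g
  | CSeq _ _ _ c1 c2 => uses_one c1 || uses_one c2
  | CTens _ _ _ _ c1 c2 => uses_one c1 || uses_one c2
  | _ => false
  end.

Definition is_Circ n m (c : circ n m) : Prop := uses_one c = false.

Definition castc n m n' m' (e1 : n = n') (e2 : m = m') (c : circ n m) : circ n' m' :=
  match e1 in _ = n1 return circ n1 m' with
  | erefl => match e2 in _ = m1 return circ n m1 with erefl => c end
  end.

Fixpoint idn n : circ n n :=
  match n return circ n n with
  | 0 => CId0
  | n'.+1 => CTens CId1 (idn n')
  end.

Definition eta : circ 0 2 := CSeq (COp GDisc) (CGen GCopy).
Definition eps : circ 2 0 := CSeq (COp GCopy) (CGen GDisc).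

(** Feedback Tr: connect the last right port of c to its last left port
    through a register x, bending with eta and eps. *)
Definition Tr n m (c : circ (n + 1) (m + 1)) : circ n m :=
  let A : circ n (n + 2) := castc (addn0 n) erefl (CTens (idn n) eta) in
  let B : circ (n + 2) (m + 2) :=
      castc (esym (addnA n 1 1)) (esym (addnA m 1 1)) (CTens c CId1) in
  let C : circ (m + 2) (m + 2) := CTens (idn m) (CTens (CGen GReg) CId1) in
  let D : circ (m + 2) m := castc erefl (addn0 m) (CTens (idn m) eps) in
  CSeq A (CSeq B (CSeq C D)).

Inductive SFgen (aff : bool) : forall n m, circ n m -> Prop :=
| sf_copy : SFgen aff (CGen GCopy)
| sf_disc : SFgen aff (CGen GDisc)
| sf_amp r : SFgen aff (CGen (GAmp r))
| sf_reg : SFgen aff (CGen GReg)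
| sf_add : SFgen aff (CGen GAdd)
| sf_zero : SFgen aff (CGen GZero)
| sf_one : aff = true -> SFgen aff (CGen GOne)
| sf_id0 : SFgen aff CId0
| sf_id1 : SFgen aff CId1
| sf_sw : SFgen aff CSw
| sf_seq n l m (c1 : circ n l) (c2 : circ l m) :
    SFgen aff c1 -> SFgen aff c2 -> SFgen aff (CSeq c1 c2)
| sf_tens n1 m1 n2 m2 (c1 : circ n1 m1) (c2 : circ n2 m2) :
    SFgen aff c1 -> SFgen aff c2 -> SFgen aff (CTens c1 c2)
| sf_tr n m (c : circ (n + 1) (m + 1)) : SFgen aff c -> SFgen aff (Tr c).

Definition SF n m (c : circ n m) : Prop := SFgen false c.
Definition ASF n m (c : circ n m) : Prop := SFgen true c.

(** A partition of the ports of c : circ n m into inputs and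
    outputs is given by P : {set 'I_n} (left ports that are inputs) and
    Q : {set 'I_m} (right ports that are inputs).  The rewiring has sort
    (#|P| + #|Q|, #|~:P| + #|~:Q|); its left ports are the input left ports
    (in order) followed by the input right ports, its right ports are the
    output left ports followed by the output right ports.  Since cups and
    caps denote equality of their two ends, the rewiring denotes the
    relation below; [@rewiring_equiv n m c P Q d] says that the rewiring of c
    along (P,Q) is equivalent to d. *)
Definition sel n (P : {set 'I_n}) (u : 'rV[K]_n) : 'rV[K]_#|P| :=
  \row_(i < #|P|) u ord0 (enum_val i).

Definition rewiring_equiv n m (c : circ n m) (P : {set 'I_n}) (Q : {set 'I_m})
    (d : circ (#|P| + #|Q|) (#|~: P| + #|~: Q|)) : Prop :=
  forall a b, sem d a b <->
    exists u v, sem c u v /\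
      a = row_mx (sel P u) (sel Q v) /\ b = row_mx (sel (~: P) u) (sel (~: Q) v).

(** Ports: inl i = i-th left port, inr j = j-th right port. *)
Definition in_inputs n m (P : {set 'I_n}) (Q : {set 'I_m}) (p : 'I_n + 'I_m) : bool :=
  match p with inl i => i \in P | inr j => j \in Q end.

Definition is_input_port n m (c : circ n m) (p : 'I_n + 'I_m) : Prop :=
  exists (P : {set 'I_n}) (Q : {set 'I_m}), in_inputs P Q p /\
    exists d : circ (#|P| + #|Q|) (#|~: P| + #|~: Q|), SF d /\ @rewiring_equiv n m c P Q d.

Definition realisable n m (c : circ n m) : Prop :=
  exists (P : {set 'I_n}) (Q : {set 'I_m})
         (d : circ (#|P| + #|Q|) (#|~: P| + #|~: Q|)), ASF d /\ @rewiring_equiv n m c P Q d.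

Definition plug_one n m (chat : circ n.+1 m) : circ n m :=
  CSeq (CTens (CGen GOne) (idn n)) chat.

End Circuits.

(* Write [sem_at t c] for the denotation of [c] in which the constant [1] denotes the scalar
   [t].  Jointly in [t] and the port values it is a subspace, so two such families that coincide
   at [t = 1] and are non-empty there coincide for every [t].  The denotation of an ASF circuit is
   non-empty: by induction it is the graph of an affine map whose matrix has causal entries
   (fractions p/q with q(0) <> 0), which is what keeps the feedback denominator 1 - g x invertible.

   If [c] is realisable through an ASF circuit [d], turn every [1] of [d] into a copy of a new first
   input wire; this gives an SF circuit [dh] with dh(t, -) = d_t.  By linearity d_t is the rewiring
   of [c] with [1] read as [t], i.e. of [chat] fed with [t] on its first port, so [dh] is an SF
   rewiring of [chat] in which that port is an input.  Conversely, plugging [1] into an SF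
   rewiring of [chat] gives an ASF rewiring of [c]. *)

From mathcomp Require Import all_boot all_order all_algebra fraction ring.
From Pilot Require Import Defs.
Set Implicit Arguments. Unset Strict Implicit. Unset Printing Implicit Defensive.
Import GRing.Theory.
Local Open Scope ring_scope.

Section LinearFamily.
Variables (R : fieldType) (U V : lmodType R).

Definition linear_family (F : R -> U -> V -> Prop) :=
  F 0 0 0 /\ forall a t u v t' u' v',
    F t u v -> F t' u' v' -> F (a * t + t') (a *: u + u') (a *: v + v').

Lemma linear_family_sub F G : linear_family F -> linear_family G ->
  (forall u v, F 1 u v -> G 1 u v) -> (exists u v, F 1 u v) ->
  forall t u v, F t u v -> G t u v.
Proof.
move=> [F0 FL] [G0 GL] FG [u1 [v1 F1]] t u v.
have [-> Ft|t_neq0 Ft] := eqVneq t 0.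
  have := FL 1 1 u1 v1 0 u v F1 Ft; rewrite mulr1 addr0 !scale1r => /FG G1.
  by have := GL (-1) 1 u1 v1 1 _ _ (FG _ _ F1) G1; rewrite mulN1r addNr !scaleN1r !addKr.
have := FL t^-1 t u v 0 0 0 Ft F0; rewrite !addr0 mulVf // => /FG G1.
by have := GL t 1 _ _ 0 0 0 G1 G0; rewrite !addr0 mulr1 !scalerA mulfV // !scale1r.
Qed.

Lemma linear_family_eq F G : linear_family F -> linear_family G ->
  (forall u v, F 1 u v <-> G 1 u v) -> (exists u v, F 1 u v) ->
  forall t u v, F t u v <-> G t u v.
Proof.
move=> linF linG FG [u1 [v1 F1]] t u v; split; apply: linear_family_sub => //.
- by move=> ? ? /FG.
- by exists u1, v1.
- by move=> ? ? /FG.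
- by exists u1, v1; apply/FG.
Qed.

End LinearFamily.

Section RowSeq.
Variable R : nzRingType.

Definition rseq n (u : 'rV[R]_n) : seq R := [seq u ord0 i | i <- enum 'I_n].
Definition row_of n (l : seq R) : 'rV[R]_n := \row_(i < n) nth 0 l i.

Lemma size_rseq n (u : 'rV[R]_n) : size (rseq u) = n.
Proof. by rewrite size_map size_enum_ord. Qed.

Lemma nth_rseq n (u : 'rV[R]_n) (i : 'I_n) : nth 0 (rseq u) i = u ord0 i.
Proof. by rewrite (nth_map i) ?size_enum_ord // nth_ord_enum. Qed.

Lemma rseq_inj n : injective (@rseq n).
Proof. by move=> u v e; apply/rowP => i; rewrite -!nth_rseq e. Qed.

Lemma row_ofK n (l : seq R) : size l = n -> rseq (row_of n l) = l.
Proof.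
move=> sl; apply: (@eq_from_nth _ 0) => [|i]; first by rewrite size_rseq.
by rewrite size_rseq => lt_in; rewrite (nth_rseq _ (Ordinal lt_in)) mxE.
Qed.

Lemma rseq_row_mx n1 n2 (u1 : 'rV[R]_n1) (u2 : 'rV[R]_n2) :
  rseq (row_mx u1 u2) = rseq u1 ++ rseq u2.
Proof.
apply: (@eq_from_nth _ 0) => [|i]; first by rewrite size_cat !size_rseq.
rewrite size_rseq => lt_in; pose o := Ordinal lt_in.
rewrite (nth_rseq _ o) -[i]/(val o) nth_cat size_rseq.
case: splitP => j /= o_j; rewrite o_j.
  by rewrite (_ : o = lshift n2 j) ?row_mxEl ?nth_rseq //; apply: val_inj.
by rewrite addKn (_ : o = rshift n1 j) ?row_mxEr ?nth_rseq //; apply: val_inj.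
Qed.

Lemma rseq0 (u : 'rV[R]_0) : rseq u = [::].
Proof. by apply: size0nil; rewrite size_rseq. Qed.

Lemma rseq1 (u : 'rV[R]_1) : rseq u = [:: u ord0 ord0].
Proof. by rewrite /rseq enum_ordSl enum_ord0. Qed.

Lemma rseq2 (u : 'rV[R]_2) : rseq u = [:: u ord0 o0; u ord0 o1].
Proof.
apply: (@eq_from_nth _ 0) => [|[|[|//]] lt_i2]; rewrite ?size_rseq //.
  exact: (nth_rseq u o0).
exact: (nth_rseq u o1).
Qed.

Lemma rseq_rcons n (u : 'rV[R]_n) (r : 'rV[R]_1) :
  rseq (row_mx u r) = rcons (rseq u) (r ord0 ord0).
Proof. by rewrite rseq_row_mx rseq1 cats1. Qed.

End RowSeq.

Section ParametricSemantics.
Variable k : fieldType.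
Local Notation K := (K k).
Local Notation circ := (circ k).

Definition sem_gen_at (t : K) n m (g : gen k n m) : 'rV[K]_n -> 'rV[K]_m -> Prop :=
  match g in gen _ n m return 'rV[K]_n -> 'rV[K]_m -> Prop with
  | GOne => fun _ v => v ord0 ord0 = t
  | GCopy => sem_gen (GCopy k)
  | GDisc => sem_gen (GDisc k)
  | GAmp r => sem_gen (GAmp r)
  | GReg => sem_gen (GReg k)
  | GAdd => sem_gen (GAdd k)
  | GZero => sem_gen (GZero k)
  end.

Fixpoint sem_at (t : K) n m (c : circ n m) : 'rV[K]_n -> 'rV[K]_m -> Prop :=
  match c in Defs.circ _ n m return 'rV[K]_n -> 'rV[K]_m -> Prop with
  | CGen _ _ g => sem_gen_at t g
  | COp _ _ g => fun u v => sem_gen_at t g v u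
  | CSeq _ _ _ c1 c2 => fun u v => exists w, sem_at t c1 u w /\ sem_at t c2 w v
  | CTens _ _ _ _ c1 c2 => fun u v =>
      sem_at t c1 (lsubmx u) (lsubmx v) /\ sem_at t c2 (rsubmx u) (rsubmx v)
  | CId0 => sem (CId0 k)
  | CId1 => sem (CId1 k)
  | CSw => sem (CSw k)
  end.

Lemma sem_at1 n m (c : circ n m) : sem_at 1 c = sem c.
Proof.
elim: c => [n0 m0 g|n0 m0 g| | | |n0 l m0 c1 IH1 c2 IH2|n1 m1 n2 m2 c1 IH1 c2 IH2] //=.
- by rewrite IH1 IH2.
- by rewrite IH1 IH2.
Qed.

Lemma sem_at_free t t' n m (c : circ n m) : uses_one c = false -> sem_at t c = sem_at t' c.
Proof.
elim: c => [n0 m0 g|n0 m0 g| | | |n0 l m0 c1 IH1 c2 IH2|n1 m1 n2 m2 c1 IH1 c2 IH2] //=.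
- by case: n0 m0 / g.
- by case: n0 m0 / g.
- by move=> /norP[/negbTE/IH1-> /negbTE/IH2->].
- by move=> /norP[/negbTE/IH1-> /negbTE/IH2->].
Qed.

Lemma sem_gen_at_linear n m (g : gen k n m) : linear_family (fun t => sem_gen_at t g).
Proof.
split; first by case: n m / g => [||r||||] /=; rewrite ?mxE ?mulr0 ?mul0r ?addr0.
case: n m / g => /= [||r||||] a t u v t' u' v'; rewrite ?mxE //.
- by move=> [-> ->] [-> ->].
- by move=> -> ->; ring.
- by move=> -> ->; ring.
- by move=> -> ->; ring.
- by move=> -> ->; ring.
- by move=> -> ->.
Qed.

Lemma sem_at_linear n m (c : circ n m) : linear_family (fun t => sem_at t c).
Proof.
elim: c => [n' m' g|n' m' g| | | |n' l m' c1 [Z1 L1] c2 [Z2 L2]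
  |n1 m1 n2 m2 c1 [Z1 L1] c2 [Z2 L2]] /=.
- exact: sem_gen_at_linear.
- have [Z L] := sem_gen_at_linear g.
  by split=> // a t u v t' u' v' H H'; apply: L.
- by [].
- by split=> // a t u v t' u' v' -> ->.
- split; first by rewrite !mxE.
  by move=> a t u v t' u' v' [e0 e1] [e0' e1']; rewrite !mxE e0 e1 e0' e1'.
- split; first by exists 0.
  move=> a t u v t' u' v' [w [H1 H2]] [w' [H1' H2']].
  by exists (a *: w + w'); split; [exact: L1 | exact: L2].
- split; first by rewrite !linear0.
  move=> a t u v t' u' v' [H1 H2] [H1' H2'].
  by rewrite !linearP; split; [exact: L1 | exact: L2].
Qed.

End ParametricSemantics.

Section ListSemantics.
Variable k : fieldType.
Local Notation K := (K k).
Local Notation circ := (circ k).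

(* Port values as lists, so that the sort arithmetic of [Tr], [plug_one] and rewirings needs
   no casts. *)
Definition lsem (t : K) n m (c : circ n m) (l1 l2 : seq K) :=
  exists u v, sem_at t c u v /\ rseq u = l1 /\ rseq v = l2.

Lemma lsem_rseq t n m (c : circ n m) u v : lsem t c (rseq u) (rseq v) <-> sem_at t c u v.
Proof.
split=> [[u' [v' [H [/rseq_inj eu /rseq_inj ev]]]]|H]; last by exists u, v.
by rewrite -eu -ev.
Qed.

Lemma lsem_size t n m (c : circ n m) l1 l2 : lsem t c l1 l2 -> size l1 = n /\ size l2 = m.
Proof. by move=> [u [v [_ [<- <-]]]]; rewrite !size_rseq. Qed.

Lemma lsem_intro t n m (c : circ n m) l1 l2 : size l1 = n -> size l2 = m ->
  sem_at t c (row_of n l1) (row_of m l2) -> lsem t c l1 l2.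
Proof. by move=> s1 s2 H; exists (row_of n l1), (row_of m l2); rewrite !row_ofK. Qed.

Lemma lsem_seq t n l m (c1 : circ n l) (c2 : circ l m) l1 l2 :
  lsem t (CSeq c1 c2) l1 l2 <-> exists l0, lsem t c1 l1 l0 /\ lsem t c2 l0 l2.
Proof.
split=> [[u [v [[w [H1 H2]] [<- <-]]]]|[_ [[u [w [H1 [<- <-]]]] [w' [v [H2 [ew <-]]]]]]].
  by exists (rseq w); split; [exists u, w | exists w, v].
by rewrite (rseq_inj ew) in H2; exists u, v; split=> //; exists w.
Qed.

Lemma lsem_tens t n1 m1 n2 m2 (c1 : circ n1 m1) (c2 : circ n2 m2) l1 l2 :
  lsem t (CTens c1 c2) l1 l2 <->
  exists a b a' b', l1 = a ++ b /\ l2 = a' ++ b' /\ lsem t c1 a a' /\ lsem t c2 b b'.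
Proof.
split=> [[u [v [[H1 H2] [<- <-]]]]|].
  exists (rseq (lsubmx u)), (rseq (rsubmx u)), (rseq (lsubmx v)), (rseq (rsubmx v)).
  by rewrite -!rseq_row_mx !hsubmxK; do 2 split=> //; split; apply/lsem_rseq.
move=> [_ [_ [_ [_ [-> [-> [[u1 [v1 [H1 [<- <-]]]] [u2 [v2 [H2 [<- <-]]]]]]]]]]].
exists (row_mx u1 u2), (row_mx v1 v2); rewrite !rseq_row_mx /=.
by rewrite !row_mxKl !row_mxKr.
Qed.

Lemma lsem_cast t n m n' m' (e1 : n = n') (e2 : m = m') (c : circ n m) :
  lsem t (castc e1 e2 c) =2 lsem t c.
Proof. by case: n' / e1; case: m' / e2. Qed.

Lemma lsem_id1 t l1 l2 : lsem t (CId1 k) l1 l2 <-> exists x, l1 = [:: x] /\ l2 = [:: x].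
Proof.
split=> [[u [v [/= -> [<- <-]]]]|[x [-> ->]]]; first by exists (v ord0 ord0); rewrite rseq1.
exact: lsem_intro.
Qed.

Lemma lsem_idn t n l1 l2 : lsem t (idn k n) l1 l2 <-> l1 = l2 /\ size l1 = n.
Proof.
elim: n l1 l2 => [|n IHn] l1 l2.
  split=> [[u [v [_ [<- <-]]]]|[<- /size0nil ->]]; first by rewrite !rseq0.
  exact: lsem_intro.
apply: iff_trans (lsem_tens t (CId1 k) (idn k n) l1 l2) _.
split=> [[_ [b [_ [_ [-> [-> [/lsem_id1 [x [-> ->]] /IHn [-> <-]]]]]]]]|] //.
move=> [<-]; case: l1 => // x l1 [sl1].
by exists [:: x], l1, [:: x], l1; rewrite lsem_id1 IHn; do 3 split => //; exists x.
Qed.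

Lemma lsem_disc t l1 l2 : lsem t (CGen (GDisc k)) l1 l2 <-> size l1 = 1%N /\ l2 = [::].
Proof.
split=> [[u [v [_ [<- <-]]]]|[s1 ->]]; last exact: lsem_intro.
by rewrite size_rseq rseq0.
Qed.

Lemma lsem_discop t l1 l2 : lsem t (COp (GDisc k)) l1 l2 <-> l1 = [::] /\ size l2 = 1%N.
Proof.
split=> [[u [v [_ [<- <-]]]]|[-> s2]]; last exact: lsem_intro.
by rewrite size_rseq rseq0.
Qed.

Lemma lsem_copy t l1 l2 :
  lsem t (CGen (GCopy k)) l1 l2 <-> exists x, l1 = [:: x] /\ l2 = [:: x; x].
Proof.
split=> [[u [v [/= [e0 e1] [<- <-]]]]|[x [-> ->]]].
  by exists (u ord0 ord0); rewrite rseq1 rseq2 e0 e1.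
by apply: lsem_intro => //=; rewrite !mxE.
Qed.

Lemma lsem_copyop t l1 l2 :
  lsem t (COp (GCopy k)) l1 l2 <-> exists x, l1 = [:: x; x] /\ l2 = [:: x].
Proof.
split=> [[u [v [/= [e0 e1] [<- <-]]]]|[x [-> ->]]].
  by exists (v ord0 ord0); rewrite rseq1 rseq2 e0 e1.
by apply: lsem_intro => //=; rewrite !mxE.
Qed.

Lemma lsem_reg t l1 l2 :
  lsem t (CGen (GReg k)) l1 l2 <-> exists x, l1 = [:: x] /\ l2 = [:: x * xK k].
Proof.
split=> [[u [v [/= e [<- <-]]]]|[x [-> ->]]].
  by exists (u ord0 ord0); rewrite !rseq1 e.
by apply: lsem_intro => //=; rewrite !mxE.
Qed.

Lemma lsem_one t l1 l2 : lsem t (CGen (GOne k)) l1 l2 <-> l1 = [::] /\ l2 = [:: t].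
Proof.
split=> [[u [v [/= e [<- <-]]]]|[-> ->]]; first by rewrite rseq0 rseq1 e.
by apply: lsem_intro => //=; rewrite !mxE.
Qed.

Lemma lsem_sw t l1 l2 :
  lsem t (CSw k) l1 l2 <-> exists x y, l1 = [:: x; y] /\ l2 = [:: y; x].
Proof.
split=> [[u [v [/= [e0 e1] [<- <-]]]]|[x [y [-> ->]]]].
  by exists (u ord0 o0), (u ord0 o1); rewrite !rseq2 e0 e1.
by apply: lsem_intro => //=; rewrite !mxE.
Qed.

End ListSemantics.

Lemma rcons2 (T : Type) (l : seq T) x y : rcons (rcons l x) y = l ++ [:: x; y].
Proof. by rewrite -!cats1 -catA. Qed.

Section Wiring.
Variable k : fieldType.
Local Notation circ := (circ k).

Lemma lsem_eta t l1 l2 : lsem t (eta k) l1 l2 <-> l1 = [::] /\ exists y, l2 = [:: y; y].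
Proof.
rewrite lsem_seq; split=> [[_ [/lsem_discop [-> _] /lsem_copy [y [_ ->]]]]|[-> [y ->]]].
  by split=> //; exists y.
by exists [:: y]; rewrite lsem_discop lsem_copy; split=> //; exists y.
Qed.

Lemma lsem_eps t l1 l2 : lsem t (eps k) l1 l2 <-> l2 = [::] /\ exists y, l1 = [:: y; y].
Proof.
rewrite lsem_seq; split=> [[_ [/lsem_copyop [y [-> _]] /lsem_disc [_ ->]]]|[-> [y ->]]].
  by split=> //; exists y.
by exists [:: y]; rewrite lsem_copyop lsem_disc; split=> //; exists y.
Qed.

Lemma lsem_idn_tens t n p q (c : circ p q) l1 l2 :
  lsem t (CTens (idn k n) c) l1 l2 <->
  exists l a b, size l = n /\ l1 = l ++ a /\ l2 = l ++ b /\ lsem t c a b.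
Proof.
rewrite lsem_tens; split=> [[l [a [_ [b [-> [-> [/lsem_idn [<- sl] Hc]]]]]]]|].
  by exists l, a, b.
by move=> [l [a [b [sl [-> [-> Hc]]]]]]; exists l, a, l, b; rewrite lsem_idn.
Qed.

Lemma lsem_Tr_bend t n l1 l2 :
  lsem t (castc (addn0 n) erefl (CTens (idn k n) (eta k))) l1 l2 <->
  size l1 = n /\ exists y, l2 = rcons (rcons l1 y) y.
Proof.
rewrite lsem_cast lsem_idn_tens.
split=> [[l [_ [_ [sl [-> [-> /lsem_eta [-> [y ->]]]]]]]]|[sl [y ->]]].
  by rewrite cats0; split=> //; exists y; rewrite rcons2.
exists l1, [::], [:: y; y]; rewrite cats0 rcons2 lsem_eta.
by do 4 split=> //; exists y.
Qed.

Lemma lsem_Tr_body t n m (c : circ (n + 1) (m + 1)) l1 l2 :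
  lsem t (castc (esym (addnA n 1 1)) (esym (addnA m 1 1)) (CTens c (CId1 k))) l1 l2 <->
  exists a b y, l1 = rcons a y /\ l2 = rcons b y /\ lsem t c a b.
Proof.
rewrite lsem_cast lsem_tens.
split=> [[a [_ [b [_ [-> [-> [Hc /lsem_id1 [y [-> ->]]]]]]]]]|[a [b [y [-> [-> Hc]]]]]].
  by exists a, b, y; rewrite !cats1.
by exists a, [:: y], b, [:: y]; rewrite !cats1 lsem_id1; do 3 split=> //; exists y.
Qed.

Lemma lsem_Tr_reg t m l1 l2 :
  lsem t (CTens (idn k m) (CTens (CGen (GReg k)) (CId1 k))) l1 l2 <->
  exists l z y, size l = m /\ l1 = rcons (rcons l z) y /\ l2 = rcons (rcons l (z * xK k)) y.
Proof.
rewrite lsem_idn_tens.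
split=> [[l [a [b [sl [-> [-> /lsem_tens]]]]]]|[l [z [y [sl [-> ->]]]]]].
  move=> [_ [_ [_ [_ [-> [-> [/lsem_reg [z [-> ->]] /lsem_id1 [y [-> ->]]]]]]]]].
  by exists l, z, y; rewrite !rcons2.
exists l, [:: z; y], [:: z * xK k; y]; rewrite !rcons2; do 3 split=> //.
apply/lsem_tens; exists [:: z], [:: y], [:: z * xK k], [:: y].
by rewrite lsem_reg lsem_id1; do 3 split=> //; [exists z | exists y].
Qed.

Lemma lsem_Tr_unbend t m l1 l2 :
  lsem t (castc erefl (addn0 m) (CTens (idn k m) (eps k))) l1 l2 <->
  size l2 = m /\ exists y, l1 = rcons (rcons l2 y) y.
Proof.
rewrite lsem_cast lsem_idn_tens.
split=> [[l [_ [_ [sl [-> [-> /lsem_eps [-> [y ->]]]]]]]]|[sl [y ->]]].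
  by rewrite cats0; split=> //; exists y; rewrite rcons2.
exists l2, [:: y; y], [::]; rewrite cats0 rcons2 lsem_eps.
by do 4 split=> //; exists y.
Qed.

Lemma lsem_Tr t n m (c : circ (n + 1) (m + 1)) l1 l2 :
  lsem t (Tr c) l1 l2 <->
  exists y z, lsem t c (rcons l1 y) (rcons l2 z) /\ y = z * xK k.
Proof.
rewrite /Tr lsem_seq; split.
  move=> [_ [/lsem_Tr_bend [_ [y ->]] /lsem_seq [_ [/lsem_Tr_body [a [b [y' [ea [-> Hc]]]]]]]]].
  move=> /lsem_seq [_ [/lsem_Tr_reg [l [z [w [_ [eb ->]]]]] /lsem_Tr_unbend [_ [v ev]]]].
  case/rcons_inj: ea => ea yy; case/rcons_inj: eb => eb yw.
  case/rcons_inj: ev => /rcons_inj [el zv] wv.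
  by exists y, z; rewrite ea -el -eb; split=> //; rewrite yy yw wv zv.
move=> [y [z [Hc yz]]]; subst y; have [sl1 sl2] : size l1 = n /\ size l2 = m.
  by have := lsem_size Hc; rewrite !size_rcons !addn1 => -[[sl1] [sl2]].
exists (rcons (rcons l1 (z * xK k)) (z * xK k)); split.
  by rewrite lsem_Tr_bend; split=> //; eexists.
apply/lsem_seq; exists (rcons (rcons l2 z) (z * xK k)); split.
  by apply/lsem_Tr_body; do 3 eexists.
apply/lsem_seq; exists (rcons (rcons l2 (z * xK k)) (z * xK k)).
rewrite lsem_Tr_reg lsem_Tr_unbend.
by split; [exists l2, z, (z * xK k) | split=> //; exists (z * xK k)].
Qed.

Lemma lsem_plug_one t n m (c : circ n.+1 m) l1 l2 :
  lsem t (plug_one c) l1 l2 <-> lsem t c (t :: l1) l2.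
Proof.
rewrite lsem_seq; split=> [[l0 []]|Hc].
  move=> /(lsem_tens t (CGen (GOne k)) (idn k n)).
  by move=> [a [b [a' [b' [-> [-> [/lsem_one [-> ->] /lsem_idn [-> _]]]]]]]].
have [[sl1] _] := lsem_size Hc; exists (t :: l1); split=> //.
apply/(lsem_tens t (CGen (GOne k)) (idn k n)).
by exists [::], l1, [:: t], l1; rewrite lsem_one lsem_idn.
Qed.

End Wiring.

Section Unplug.
Variable k : fieldType.
Local Notation circ := (circ k).

Fixpoint rot1 n : circ (1 + n) (n + 1) :=
  match n with
  | 0 => CId1 k
  | n'.+1 => CSeq (CTens (CSw k) (idn k n')) (CTens (CId1 k) (rot1 n'))
  end.

Lemma lsem_id1_front t n m (c : circ n m) x l1 l2 :
  lsem t (CTens (CId1 k) c) (x :: l1) l2 <-> exists l, l2 = x :: l /\ lsem t c l1 l.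
Proof.
rewrite lsem_tens; split=> [[a [b [a' [l [ea [-> [/lsem_id1 [y [ea1 ->]] Hc]]]]]]]|].
  by move: ea; rewrite ea1 => -[<- eb]; exists l; rewrite eb.
move=> [l [-> Hc]]; exists [:: x], l1, [:: x], l; rewrite lsem_id1.
by do 3 split=> //; exists x.
Qed.

Lemma lsem_copy_front t n m (c : circ (2 + n) m) x l1 l2 :
  lsem t (CSeq (CTens (CGen (GCopy k)) (idn k n)) c) (x :: l1) l2 <->
  lsem t c [:: x, x & l1] l2.
Proof.
rewrite lsem_seq.
split=> [[_ [/lsem_tens [a [b [a' [b' [ea [-> [Hcp /lsem_idn [<- _]]]]]]]] Hc]]|Hc].
  by move: ea Hc; case/lsem_copy: Hcp => y [-> ->] [<- <-].
have [[sl1] _] := lsem_size Hc; exists [:: x, x & l1]; split=> //.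
apply/lsem_tens; exists [:: x], l1, [:: x; x], l1; rewrite lsem_copy lsem_idn.
by do 3 split=> //; exists x.
Qed.

Lemma lsem_rot1 t n l1 l2 :
  lsem t (rot1 n) l1 l2 <-> exists x l, l1 = x :: l /\ l2 = rcons l x /\ size l = n.
Proof.
elim: n l1 l2 => [|n IHn] l1 l2.
  rewrite lsem_id1; split=> [[x [-> ->]]|[x [l [-> [-> /size0nil ->]]]]]; last by exists x.
  by exists x, [::].
apply: iff_trans (lsem_seq t (CTens (CSw k) (idn k n)) (CTens (CId1 k) (rot1 n)) l1 l2) _.
split=> [[_ [/lsem_tens
    [a [b [a' [b' [-> [-> [/lsem_sw [x [y [-> ->]]] /lsem_idn [<- sb]]]]]]]]]]|].
  move=> /lsem_id1_front [_ [-> /IHn [_ [l [[<- <-] [-> sl]]]]]].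
  by exists x, (y :: b); rewrite /= sb.
move=> [x [[|y l] [-> [-> //= [sl]]]]]; exists [:: y, x & l]; split.
  apply/lsem_tens; exists [:: x; y], l, [:: y; x], l; rewrite lsem_sw lsem_idn.
  by do 3 split=> //; exists x, y.
by apply/lsem_id1_front; exists (rcons l x); split=> //; apply/IHn; exists x, l.
Qed.

Lemma SFgen_idn b n : SFgen b (idn k n).
Proof.
elim: n => [|n IHn]; first exact: sf_id0.
exact: (@sf_tens k b 1 1 n n _ _ (sf_id1 k b) IHn).
Qed.

Lemma SFgen_cast b n m n' m' (e1 : n = n') (e2 : m = m') (c : circ n m) :
  SFgen b c -> SFgen b (castc e1 e2 c).
Proof. by case: n' / e1; case: m' / e2. Qed.

Lemma SFgen_rot1 b n : SFgen b (rot1 n).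
Proof.
elim: n => [|n IHn]; first exact: sf_id1.
apply: sf_seq; first exact: (@sf_tens k b 2 2 n n _ _ (sf_sw k b) (SFgen_idn b n)).
exact: (@sf_tens k b 1 1 _ _ _ _ (sf_id1 k b) IHn).
Qed.

Lemma lsem_free t t' n m (c : circ n m) : uses_one c = false -> lsem t c =2 lsem t' c.
Proof. by move=> free_c l1 l2; rewrite /lsem (sem_at_free t t' free_c). Qed.

Definition unplugs n m (dh : circ (1 + n) m) (d : circ n m) :=
  forall t l1 l2, lsem 1 dh (t :: l1) l2 <-> lsem t d l1 l2.

Lemma unplugs_free n m (c : circ n m) :
  uses_one c = false -> unplugs (CTens (CGen (GDisc k)) c) c.
Proof.
move=> free_c t l1 l2; rewrite -(lsem_free 1 t free_c) lsem_tens.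
split=> [[[|x [|? ?]] [b [a' [b' [ea [-> [/lsem_disc [//= _ ->] Hc]]]]]]]|Hc].
  by case: ea => _ ->.
by exists [:: t], l1, [::], l2; rewrite lsem_disc.
Qed.

Lemma unplugs_one : unplugs (CId1 k) (CGen (GOne k)).
Proof.
move=> t l1 l2; rewrite lsem_id1 lsem_one.
by split=> [[x [[-> ->] ->]]|[-> ->]] //; exists t.
Qed.

Definition unplug_seq n l m (dh1 : circ (1 + n) l) (dh2 : circ (1 + l) m) : circ (1 + n) m :=
  CSeq (CTens (CGen (GCopy k)) (idn k n)) (CSeq (CTens (CId1 k) dh1) dh2).

Lemma unplug_tens_sort n1 n2 : ((1 + n1) + (1 + n2) = 1 + ((n1 + 1) + n2))%N.
Proof. by rewrite addn1 addSn addnS. Qed.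

(* One copy of the new wire feeds [dh1]; [rot1] moves the other past the inputs of [dh1] to
   the front of [dh2]. *)
Definition unplug_tens n1 m1 n2 m2 (dh1 : circ (1 + n1) m1) (dh2 : circ (1 + n2) m2) :
    circ (1 + (n1 + n2)) (m1 + m2) :=
  CSeq (CTens (CGen (GCopy k)) (idn k (n1 + n2)))
    (CSeq (CTens (CId1 k) (CTens (rot1 n1) (idn k n2)))
          (castc (unplug_tens_sort n1 n2) erefl (CTens dh1 dh2))).

Lemma SFgen_unplug_seq b n l m (dh1 : circ (1 + n) l) (dh2 : circ (1 + l) m) :
  SFgen b dh1 -> SFgen b dh2 -> SFgen b (unplug_seq dh1 dh2).
Proof.
move=> SF1 SF2; apply: sf_seq.
  exact: (@sf_tens k b 1 2 n n _ _ (sf_copy _ _) (SFgen_idn _ _)).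
by apply: sf_seq => //; exact: (@sf_tens k b 1 1 _ _ _ _ (sf_id1 _ _) SF1).
Qed.

Lemma SFgen_unplug_tens b n1 m1 n2 m2 (dh1 : circ (1 + n1) m1) (dh2 : circ (1 + n2) m2) :
  SFgen b dh1 -> SFgen b dh2 -> SFgen b (unplug_tens dh1 dh2).
Proof.
move=> SF1 SF2; apply: sf_seq.
  exact: (@sf_tens k b 1 2 _ _ _ _ (sf_copy _ _) (SFgen_idn _ _)).
apply: sf_seq; last exact/SFgen_cast/sf_tens.
exact: (@sf_tens k b 1 1 _ _ _ _ (sf_id1 _ _) (sf_tens (SFgen_rot1 _ _) (SFgen_idn _ _))).
Qed.

Lemma unplugs_seq n l m (c1 : circ n l) (c2 : circ l m) dh1 dh2 :
  unplugs dh1 c1 -> unplugs dh2 c2 -> unplugs (unplug_seq dh1 dh2) (CSeq c1 c2).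
Proof.
move=> H1 H2 t l1 l2; rewrite /unplug_seq lsem_copy_front !lsem_seq.
split=> [[_ [/lsem_id1_front [l0 [-> /H1 Hc1]] /H2 Hc2]]|[l0 [/H1 Hc1 /H2 Hc2]]].
  by exists l0.
by exists (t :: l0); split=> //; apply/lsem_id1_front; exists l0.
Qed.

Lemma unplugs_tens n1 m1 n2 m2 (c1 : circ n1 m1) (c2 : circ n2 m2) dh1 dh2 :
  unplugs dh1 c1 -> unplugs dh2 c2 -> unplugs (unplug_tens dh1 dh2) (CTens c1 c2).
Proof.
move=> H1 H2 t l1 l2; rewrite /unplug_tens lsem_copy_front lsem_seq lsem_tens.
split=> [[l0 [/lsem_id1_front [l [-> /(lsem_tens 1 (rot1 n1) (idn k n2)) Hrot]] Hc]]|].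
  case: Hrot => [ta [b [a1 [b1 [el [el0 [Hrot /lsem_idn [eb _]]]]]]]].
  case/lsem_rot1: Hrot => [x [a [eta1 [ea1 sa]]]]; subst l ta a1 b1.
  case: el => tx el1; subst x l1; move: Hc.
  rewrite lsem_cast lsem_tens cat_rcons -cat_cons.
  move=> [a2 [b2 [a' [b' [e12 [-> [Hc1 Hc2]]]]]]].
  have [sa2 _] := lsem_size Hc1.
  move/eqP: e12; rewrite eqseq_cat /= ?sa ?sa2 // => /andP [/eqP ea /eqP eb].
  by exists a, b, a', b'; rewrite -H1 -H2 ea eb.
move=> [a [b [a' [b' [-> [-> [/H1 Hc1 /H2 Hc2]]]]]]].
have [[sa] _] := lsem_size Hc1; have [[sb] _] := lsem_size Hc2.
exists (t :: (rcons a t ++ b)); split.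
  apply/lsem_id1_front; exists (rcons a t ++ b); split=> //.
  apply/(lsem_tens 1 (rot1 n1) (idn k n2)).
  exists (t :: a), b, (rcons a t), b; rewrite lsem_rot1 lsem_idn.
  by do 3 split=> //; exists t, a.
by rewrite lsem_cast lsem_tens cat_rcons; exists (t :: a), (t :: b), a', b'.
Qed.

Lemma unplugs_Tr n m (c : circ (n + 1) (m + 1)) dh :
  unplugs dh c -> unplugs (Tr (n := 1 + n) dh) (Tr c).
Proof.
move=> H t l1 l2; rewrite !lsem_Tr.
by split=> [[y [z [/H Hc e]]]|[y [z [/H Hc e]]]]; exists y, z.
Qed.

Lemma SFgen_ASF b n m (c : circ n m) : SFgen b c -> ASF c.
Proof. by elim=> *; constructor. Qed.

Lemma ASF_unplug n m (d : circ n m) : ASF d -> exists dh, SF dh /\ unplugs dh d.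
Proof.
have free_SF n' m' (c : circ n' m') :
    uses_one c = false -> SF c -> exists dh, SF dh /\ unplugs dh c.
  move=> free_c SFc; exists (CTens (CGen (GDisc k)) c).
  by split; [exact: (sf_tens (sf_disc _ _) SFc) | exact: unplugs_free].
elim=> {n m d} [||r||||_||||n l m c1 c2 _ [dh1 [SF1 H1]] _ [dh2 [SF2 H2]]
  |n1 m1 n2 m2 c1 c2 _ [dh1 [SF1 H1]] _ [dh2 [SF2 H2]]|n m c _ [dh [SFdh H]]];
  try by apply: free_SF => //; constructor.
- by exists (CId1 k); split; [constructor | exact: unplugs_one].
- by exists (unplug_seq dh1 dh2); split; [exact: SFgen_unplug_seq | exact: unplugs_seq].
- by exists (unplug_tens dh1 dh2); split; [exact: SFgen_unplug_tens | exact: unplugs_tens].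
- by exists (Tr (n := 1 + n) dh); split; [exact: sf_tr | exact: unplugs_Tr].
Qed.

End Unplug.

Section Causal.
Variable k : fieldType.
Local Notation K := (K k).
Local Notation xK := (xK k).

Definition causal (f : K) := exists p q : {poly k}, q.[0] != 0 /\ f = kx p / kx q.

Lemma kx_neq0 (q : {poly k}) : q.[0] != 0 -> kx q != 0.
Proof. by rewrite /kx tofrac_eq0; apply: contraNneq => ->; rewrite horner0. Qed.

Lemma causal_kx p : causal (kx p).
Proof. by exists p, 1; rewrite hornerC oner_neq0 /kx tofrac1 divr1. Qed.

Lemma causal0 : causal 0.
Proof. by have := causal_kx 0; rewrite /kx tofrac0. Qed.

Lemma causal1 : causal 1.
Proof. by have := causal_kx 1; rewrite /kx tofrac1. Qed.

Lemma causalD f g : causal f -> causal g -> causal (f + g).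
Proof.
move=> [p1 [q1 [q1_0 ->]]] [p2 [q2 [q2_0 ->]]].
exists (p1 * q2 + p2 * q1), (q1 * q2); rewrite hornerM mulf_neq0 //.
by rewrite addf_div ?kx_neq0 // /kx tofracD !tofracM.
Qed.

Lemma causalM f g : causal f -> causal g -> causal (f * g).
Proof.
move=> [p1 [q1 [q1_0 ->]]] [p2 [q2 [q2_0 ->]]].
by exists (p1 * p2), (q1 * q2); rewrite hornerM mulf_neq0 // mulf_div /kx !tofracM.
Qed.

Lemma causal_sum n (F : 'I_n -> K) : (forall i, causal (F i)) -> causal (\sum_i F i).
Proof.
by move=> causalF; apply: (big_ind causal causal0 causalD).
Qed.

Lemma causal_feedback g :
  causal g -> 1 - g * xK != 0 /\ causal (xK / (1 - g * xK)).
Proof.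
move=> [p [q [q_0 ->]]].
have pq_0 : (q - p * 'X).[0] != 0 by rewrite hornerD hornerN hornerMX mulr0 subr0.
have -> : 1 - kx p / kx q * xK = kx (q - p * 'X) / kx q.
  by rewrite /xK /kx tofracB tofracM mulrBl divff ?kx_neq0 // mulrAC.
split; first by rewrite mulf_neq0 ?invr_eq0 ?kx_neq0.
by exists ('X * q), (q - p * 'X); rewrite invf_div mulrA /xK /kx tofracM.
Qed.

Definition causal_mx n m (M : 'M[K]_(n, m)) := forall i j, causal (M i j).

Lemma causal_mx_const n m (x : K) : causal x -> causal_mx (const_mx x : 'M_(n, m)).
Proof. by move=> causal_x i j; rewrite mxE. Qed.

Lemma causal_mx0 n m : causal_mx (0 : 'M_(n, m)).
Proof. by move=> i j; rewrite mxE; apply: causal0. Qed.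

Lemma causal_mxD n m (A B : 'M_(n, m)) : causal_mx A -> causal_mx B -> causal_mx (A + B).
Proof. by move=> cA cB i j; rewrite mxE; apply: causalD. Qed.

Lemma causal_mxZ n m x (A : 'M_(n, m)) : causal x -> causal_mx A -> causal_mx (x *: A).
Proof. by move=> cx cA i j; rewrite mxE; apply: causalM. Qed.

Lemma causal_mxM n p m (A : 'M_(n, p)) (B : 'M_(p, m)) :
  causal_mx A -> causal_mx B -> causal_mx (A *m B).
Proof. by move=> cA cB i j; rewrite mxE; apply: causal_sum => l; apply: causalM. Qed.

Lemma causal_mx_block n1 n2 m1 m2 (A : 'M_(n1, m1)) (B : 'M_(n1, m2))
    (C : 'M_(n2, m1)) (D : 'M_(n2, m2)) :
  causal_mx A -> causal_mx B -> causal_mx C -> causal_mx D ->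
  causal_mx (block_mx A B C D).
Proof.
move=> cA cB cC cD i j.
case: (split_ordP i) => i' ->; case: (split_ordP j) => j' ->;
  by rewrite ?block_mxEul ?block_mxEur ?block_mxEdl ?block_mxEdr.
Qed.

Lemma causal_mx_sub n1 n2 m1 m2 (A : 'M_(n1 + n2, m1 + m2)) :
  causal_mx A -> [/\ causal_mx (ulsubmx A), causal_mx (ursubmx A),
                     causal_mx (dlsubmx A) & causal_mx (drsubmx A)].
Proof. by move=> cA; split=> i j; rewrite !mxE. Qed.

End Causal.

Section AffineSemantics.
Variable k : fieldType.
Local Notation K := (K k).
Local Notation circ := (circ k).
Local Notation xK := (xK k).

Definition causal_affine n m (d : circ n m) :=
  exists (M : 'M[K]_(n, m)) (b : 'rV[K]_m),
    causal_mx M /\ forall u, sem_at 1 d u (u *m M + b).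

Lemma causal_affine_Tr n m (c : circ (n + 1) (m + 1)) :
  causal_affine c -> causal_affine (Tr c).
Proof.
move=> [M [b [cM Hc]]].
have [cL cR cD _] := causal_mx_sub cM.
pose g := M (rshift n ord0) (rshift m ord0).
have [g_1 ch] := causal_feedback (cM (rshift n ord0) (rshift m ord0)).
pose h := xK / (1 - g * xK).
have h_fix : h = xK + h * g * xK.
  have h_1 : h * (1 - g * xK) = xK by rewrite /h divfK.
  by rewrite -{1}h_1 mulrBr mulr1 mulrA subrK.
(* The fed-back value [s] below solves s = (beta + s g) x, whence s = h beta. *)
pose L' := ulsubmx M + h *: (ursubmx M *m dlsubmx M).
pose b' := lsubmx b + h *: (rsubmx b *m dlsubmx M).
exists L', b'; split.
  by apply: causal_mxD => //; apply: causal_mxZ => //; apply: causal_mxM.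
move=> u; pose beta := u *m ursubmx M + rsubmx b; pose s := h *: beta.
have out : row_mx u s *m M + b = row_mx (u *m L' + b') (beta + s *m drsubmx M).
  rewrite -{1}(submxK M) -{1}(hsubmxK b) mul_row_block add_row_mx; congr row_mx.
    rewrite /L' /b' /s /beta -scalemxAl mulmxDl mulmxDr -scalemxAr !mulmxA scalerDr.
    by rewrite !addrA; apply: addrAC.
  by rewrite addrAC.
apply/lsem_rseq/lsem_Tr; exists (s ord0 ord0), ((beta + s *m drsubmx M) ord0 ord0).
rewrite -!rseq_rcons -out lsem_rseq; split=> //.
rewrite /s; move: (beta) => beta0; rewrite !mxE big_ord1 !mxE -/g {1}h_fix.
ring.
Qed.

Lemma causal_affine_seq n l m (c1 : circ n l) (c2 : circ l m) :
  causal_affine c1 -> causal_affine c2 -> causal_affine (CSeq c1 c2).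
Proof.
move=> [M1 [b1 [cM1 H1]]] [M2 [b2 [cM2 H2]]].
exists (M1 *m M2), (b1 *m M2 + b2); split; first exact: causal_mxM.
by move=> u; exists (u *m M1 + b1); rewrite mulmxA addrA -mulmxDl.
Qed.

Lemma causal_affine_tens n1 m1 n2 m2 (c1 : circ n1 m1) (c2 : circ n2 m2) :
  causal_affine c1 -> causal_affine c2 -> causal_affine (CTens c1 c2).
Proof.
move=> [M1 [b1 [cM1 H1]]] [M2 [b2 [cM2 H2]]].
exists (block_mx M1 0 0 M2), (row_mx b1 b2); split.
  by apply: causal_mx_block => //; apply: causal_mx0.
move=> u; rewrite -[u]hsubmxK mul_row_block !mulmx0 addr0 add0r add_row_mx /=.
by rewrite !row_mxKl !row_mxKr.
Qed.

Lemma causal_affine_lin n m (M : 'M[K]_(n, m)) b (d : circ n m) :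
  causal_mx M -> (forall u, sem_at 1 d u (u *m M + b)) -> causal_affine d.
Proof. by move=> cM Hd; exists M, b. Qed.

Lemma ASF_causal_affine n m (d : circ n m) : ASF d -> causal_affine d.
Proof.
have o1E : lift ord0 ord0 = o1 by apply: val_inj.
elim=> {n m d} [||r||||_||||n l m c1 c2 _ IH1 _ IH2|n1 m1 n2 m2 c1 c2 _ IH1 _ IH2|n m c _ IH].
- apply: (@causal_affine_lin _ _ (const_mx 1) 0); first exact/causal_mx_const/causal1.
  by move=> u /=; rewrite !mxE !big_ord1 !mxE mulr1 addr0.
- by apply: (@causal_affine_lin _ _ 0 0); first exact: causal_mx0.
- apply: (@causal_affine_lin _ _ (const_mx (kx r%:P)) 0); first exact/causal_mx_const/causal_kx.
  by move=> u /=; rewrite !mxE big_ord1 !mxE addr0 mulrC.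
- apply: (@causal_affine_lin _ _ (const_mx xK) 0); first exact/causal_mx_const/causal_kx.
  by move=> u /=; rewrite !mxE big_ord1 !mxE addr0.
- apply: (@causal_affine_lin _ _ (const_mx 1) 0); first exact/causal_mx_const/causal1.
  by move=> u /=; rewrite !mxE !big_ord_recl big_ord0 !mxE !mulr1 o1E !addr0.
- apply: (@causal_affine_lin _ _ 0 0); first exact: causal_mx0.
  by move=> u /=; rewrite mulmx0 addr0 mxE.
- apply: (@causal_affine_lin _ _ 0 (const_mx 1)); first exact: causal_mx0.
  by move=> u /=; rewrite mulmx0 add0r mxE.
- by apply: (@causal_affine_lin _ _ 0 0); first exact: causal_mx0.
- apply: (@causal_affine_lin _ _ 1%:M 0).
    by move=> i j; rewrite mxE; case: (i == j); [exact: causal1 | exact: causal0].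
  by move=> u /=; rewrite mulmx1 addr0.
- apply: (@causal_affine_lin _ _ (\matrix_(i, j) (i != j)%:R) 0).
    by move=> i j; rewrite mxE; case: (i != j); [exact: causal1 | exact: causal0].
  by move=> u /=; rewrite !mxE !big_ord_recl !big_ord0 !mxE /= o1E !mulr0 !mulr1 !add0r !addr0.
- exact: causal_affine_seq.
- exact: causal_affine_tens.
- exact: causal_affine_Tr.
Qed.

End AffineSemantics.

Lemma ASF_sem_nonempty (k : fieldType) n m (d : circ k n m) : ASF d -> exists u v, sem d u v.
Proof. by case/ASF_causal_affine=> M [b [_ Hd]]; exists 0, (0 *m M + b); rewrite -sem_at1. Qed.

Definition behead_set n (S : {set 'I_n.+1}) : {set 'I_n} := [set j | lift ord0 j \in S].

Lemma enum_behead_set n (S : {set 'I_n.+1}) :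
  enum S = (if ord0 \in S then [:: ord0] else [::]) ++ map (lift ord0) (enum (behead_set S)).
Proof.
have enum_filter m (A : {set 'I_m}) : enum A = filter (mem A) (enum 'I_m).
  by rewrite enumT.
rewrite !enum_filter enum_ordSl /= filter_map.
have -> : [seq i <- enum 'I_n | preim (lift ord0) (mem S) i] =
          [seq i <- enum 'I_n | i \in behead_set S].
  by apply: eq_filter => j; rewrite /= inE.
by case: (ord0 \in S).
Qed.

Lemma card_behead_set n (S : {set 'I_n.+1}) : #|S| = ((ord0 \in S) + #|behead_set S|)%N.
Proof. by rewrite !cardE enum_behead_set size_cat size_map; case: (ord0 \in S). Qed.

Lemma behead_setC n (S : {set 'I_n.+1}) : behead_set (~: S) = ~: behead_set S.
Proof. by apply/setP => j; rewrite !inE. Qed.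

Lemma behead_set_lift n (S : {set 'I_n}) : behead_set (ord0 |: lift ord0 @: S) = S.
Proof.
apply/setP => j; rewrite !inE (mem_imset _ _ (@lift_inj _ ord0)).
by rewrite eq_sym (negbTE (neq_lift ord0 j)).
Qed.

Section ListRewiring.
Variable k : fieldType.
Local Notation K := (K k).
Local Notation circ := (circ k).

Definition lsel n (P : {set 'I_n}) (l : seq K) : seq K := [seq nth 0 l i | i : 'I_n <- enum P].

Lemma size_lsel n (P : {set 'I_n}) l : size (lsel P l) = #|P|.
Proof. by rewrite size_map cardE. Qed.

Lemma rseq_sel n (P : {set 'I_n}) (u : 'rV[K]_n) : rseq (sel P u) = lsel P (rseq u).
Proof.
apply: (@eq_from_nth _ 0) => [|i]; first by rewrite size_rseq size_lsel.
rewrite size_rseq => lt_iP; pose o := Ordinal lt_iP.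
rewrite (nth_rseq _ o) mxE (nth_map (enum_val o)) -?cardE // nth_rseq.
by congr (u _ _); apply: (enum_val_nth (enum_val o) o).
Qed.

Lemma lsel_cons n (S : {set 'I_n.+1}) x l :
  lsel S (x :: l) = (if ord0 \in S then [:: x] else [::]) ++ lsel (behead_set S) l.
Proof. by rewrite /lsel enum_behead_set map_cat -map_comp; case: (ord0 \in S). Qed.

Definition lrew n m (rel : seq K -> seq K -> Prop) (P : {set 'I_n}) (Q : {set 'I_m})
    (la lb : seq K) :=
  exists lu lv, rel lu lv /\
    la = lsel P lu ++ lsel Q lv /\ lb = lsel (~: P) lu ++ lsel (~: Q) lv.

Definition rewire_rel n m (rel : 'rV[K]_n -> 'rV[K]_m -> Prop) (P : {set 'I_n}) (Q : {set 'I_m})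
    (a : 'rV[K]_(#|P| + #|Q|)) (b : 'rV[K]_(#|~: P| + #|~: Q|)) :=
  exists u v, rel u v /\
    a = row_mx (sel P u) (sel Q v) /\ b = row_mx (sel (~: P) u) (sel (~: Q) v).
Arguments rewire_rel [n m] rel P Q a b.

Lemma lrew_size n m rel (P : {set 'I_n}) (Q : {set 'I_m}) la lb :
  lrew rel P Q la lb -> size la = (#|P| + #|Q|)%N /\ size lb = (#|~: P| + #|~: Q|)%N.
Proof. by move=> [lu [lv [_ [-> ->]]]]; rewrite !size_cat !size_lsel. Qed.

Lemma lrew_rseq t n m (c : circ n m) P Q a b :
  lrew (lsem t c) P Q (rseq a) (rseq b) <-> rewire_rel (sem_at t c) P Q a b.
Proof.
split=> [[_ [_ [[u [v [H [<- <-]]]] [ea eb]]]]|[u [v [H [-> ->]]]]].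
  by exists u, v; split=> //; split; apply: rseq_inj; rewrite rseq_row_mx !rseq_sel.
by exists (rseq u), (rseq v); rewrite !rseq_row_mx !rseq_sel; split=> //; exists u, v.
Qed.

Lemma sel_linearP n (P : {set 'I_n}) a (u u' : 'rV[K]_n) :
  sel P (a *: u + u') = a *: sel P u + sel P u'.
Proof. by apply/rowP => i; rewrite !mxE. Qed.

Lemma sel0 n (P : {set 'I_n}) : @sel k n P 0 = 0.
Proof. by apply/rowP => i; rewrite !mxE. Qed.

Lemma rewire_rel_linear n m (F : K -> 'rV[K]_n -> 'rV[K]_m -> Prop) P Q :
  linear_family F -> linear_family (fun t => rewire_rel (F t) P Q).
Proof.
move=> [F0 FL]; split.
  by exists 0, 0; rewrite !sel0 !row_mx0.
move=> a t _ _ t' _ _ [u [v [H [-> ->]]]] [u' [v' [H' [-> ->]]]].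
exists (a *: u + u'), (a *: v + v'); split; first exact: FL.
by rewrite !sel_linearP !scale_row_mx !add_row_mx.
Qed.

Lemma eq_lrel n m (X Y : seq K -> seq K -> Prop) :
  (forall la lb, X la lb -> size la = n /\ size lb = m) ->
  (forall la lb, Y la lb -> size la = n /\ size lb = m) ->
  (forall (a : 'rV[K]_n) (b : 'rV[K]_m), X (rseq a) (rseq b) <-> Y (rseq a) (rseq b)) ->
  forall la lb, X la lb <-> Y la lb.
Proof.
move=> sX sY XY la lb; split=> H.
  by have [sa sb] := sX _ _ H; move: H; rewrite -(row_ofK sa) -(row_ofK sb) XY.
by have [sa sb] := sY _ _ H; move: H; rewrite -(row_ofK sa) -(row_ofK sb) XY.
Qed.

Lemma rewiring_equiv_lsem n m (c : circ n m) (P : {set 'I_n}) (Q : {set 'I_m})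
    (d : circ (#|P| + #|Q|) (#|~: P| + #|~: Q|)) :
  rewiring_equiv c d <-> forall la lb, lsem 1 d la lb <-> lrew (lsem 1 c) P Q la lb.
Proof.
split=> [Hd|Hd a b]; last by rewrite -sem_at1 -lsem_rseq Hd lrew_rseq sem_at1.
apply: eq_lrel => [la lb|la lb|a b]; [exact: lsem_size | exact: lrew_size |].
by rewrite lsem_rseq lrew_rseq sem_at1 Hd -sem_at1.
Qed.

Lemma rewiring_equiv_at n m (c : circ n m) (P : {set 'I_n}) (Q : {set 'I_m})
    (d : circ (#|P| + #|Q|) (#|~: P| + #|~: Q|)) :
  ASF d -> rewiring_equiv c d ->
  forall t la lb, lsem t d la lb <-> lrew (lsem t c) P Q la lb.
Proof.
move=> ASFd Hd t; apply: eq_lrel => [la lb|la lb|a b]; [exact: lsem_size | exact: lrew_size |].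
rewrite lsem_rseq lrew_rseq; move: t a b.
apply: linear_family_eq; [exact: sem_at_linear | exact/rewire_rel_linear/sem_at_linear | |].
  by move=> a b; rewrite !sem_at1 Hd.
by have [a [b Hab]] := ASF_sem_nonempty ASFd; exists a, b; rewrite sem_at1.
Qed.

Lemma lrew_behead n m rel (P : {set 'I_n.+1}) (Q : {set 'I_m}) t la lb :
  ord0 \in P -> (forall lu lv, rel lu lv -> size lu = n.+1) ->
  lrew rel P Q (t :: la) lb <-> lrew (fun lu lv => rel (t :: lu) lv) (behead_set P) Q la lb.
Proof.
move=> P0 s_rel; split=> [[[|y lu] [lv [H [ea ->]]]]|[lu [lv [H [-> ->]]]]].
- by have := s_rel _ _ H.
- move: ea; rewrite lsel_cons P0 => -[-> ->]; exists lu, lv.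
  by rewrite lsel_cons inE P0 behead_setC.
- by exists (t :: lu), lv; rewrite !lsel_cons inE P0 behead_setC.
Qed.

End ListRewiring.

Section Realisability.
Variable k : fieldType.
Local Notation K := (K k).
Local Notation circ := (circ k).

Lemma lrew_iff n m (rel rel' : seq K -> seq K -> Prop) (P : {set 'I_n}) (Q : {set 'I_m}) la lb :
  (forall lu lv, rel lu lv <-> rel' lu lv) -> lrew rel P Q la lb <-> lrew rel' P Q la lb.
Proof.
by move=> E; split=> -[lu [lv [H e]]]; exists lu, lv; split=> //; apply/E.
Qed.

Lemma rewiring_equiv_circ_equiv n m (c c' : circ n m) (P : {set 'I_n}) (Q : {set 'I_m})
    (d : circ (#|P| + #|Q|) (#|~: P| + #|~: Q|)) :
  circ_equiv c c' -> rewiring_equiv c d <-> rewiring_equiv c' d.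
Proof.
move=> cc'; split=> Hd a b; rewrite Hd.
  by split=> -[u [v [H e]]]; exists u, v; split=> //; apply/cc'.
by split=> -[u [v [H e]]]; exists u, v; split=> //; apply/cc'.
Qed.

Lemma lrew_unplug n m (chat : circ n.+1 m) (P : {set 'I_n.+1}) (Q : {set 'I_m}) t la lb :
  uses_one chat = false -> ord0 \in P ->
  lrew (lsem 1 chat) P Q (t :: la) lb <->
  lrew (lsem t (plug_one chat)) (behead_set P) Q la lb.
Proof.
move=> free_chat P0; rewrite lrew_behead //; last by move=> lu lv /lsem_size [].
by apply: lrew_iff => lu lv; rewrite lsem_plug_one (lsem_free _ 1 free_chat).
Qed.

Lemma ASF_plug_one b n m (c : circ n.+1 m) : SFgen b c -> ASF (plug_one c).
Proof.
move=> SFc; apply: sf_seq; last exact: SFgen_ASF SFc.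
exact: (@sf_tens k true 0 1 n n _ _ (sf_one _ erefl) (SFgen_idn _ _ n)).
Qed.

Lemma input_port_of_realisable n m (c : circ n m) (chat : circ n.+1 m) :
  is_Circ chat -> circ_equiv c (plug_one chat) ->
  realisable c -> is_input_port chat (inl ord0).
Proof.
move=> free_chat c_plug [P' [Q [d [ASFd Hd]]]].
move/(rewiring_equiv_circ_equiv _ c_plug): Hd => Hd.
have [dh [SFdh dh_d]] := ASF_unplug ASFd.
pose P := ord0 |: lift ord0 @: P'.
have P0 : ord0 \in P by rewrite !inE eqxx.
have P'E : behead_set P = P' := behead_set_lift P'.
have e1 : (1 + (#|P'| + #|Q|) = #|P| + #|Q|)%N.
  by rewrite (card_behead_set P) P0 P'E addnA.
have e2 : (#|~: P'| + #|~: Q| = #|~: P| + #|~: Q|)%N.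
  by rewrite (card_behead_set (~: P)) inE P0 behead_setC P'E.
exists P, Q; split=> //; exists (castc e1 e2 dh); split; first exact: SFgen_cast.
apply/rewiring_equiv_lsem => -[|t la] lb; rewrite lsem_cast.
  split=> [/lsem_size [] //|/lrew_size []].
  by rewrite (card_behead_set P) P0.
by rewrite dh_d (rewiring_equiv_at ASFd Hd) lrew_unplug // P'E.
Qed.

Lemma realisable_of_input_port n m (c : circ n m) (chat : circ n.+1 m) :
  is_Circ chat -> circ_equiv c (plug_one chat) ->
  is_input_port chat (inl ord0) -> realisable c.
Proof.
move=> free_chat c_plug [P [Q [/= P0 [d [SFd Hd]]]]].
pose P' := behead_set P.
have e1 : (#|P| + #|Q| = (#|P'| + #|Q|).+1)%N by rewrite (card_behead_set P) P0 -addnA.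
have e2 : (#|~: P| + #|~: Q| = #|~: P'| + #|~: Q|)%N.
  by rewrite (card_behead_set (~: P)) inE P0 behead_setC.
exists P', Q, (plug_one (castc e1 e2 d)).
split; first exact: ASF_plug_one (SFgen_cast e1 e2 SFd).
apply/(rewiring_equiv_circ_equiv _ c_plug)/rewiring_equiv_lsem => la lb.
by rewrite lsem_plug_one lsem_cast (iffLR (rewiring_equiv_lsem _ _) Hd) lrew_unplug.
Qed.

End Realisability.

Theorem theorem6 (k : fieldType) (n m : nat) (c : circ k n m) (chat : circ k n.+1 m) :
  is_Circ chat ->
  circ_equiv c (plug_one chat) ->
  (realisable c <-> is_input_port chat (inl ord0)).
Proof.
move=> free_chat c_plug.
by split; [exact: input_port_of_realisable | exact: realisable_of_input_port].
Qed.
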